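(* Let $a,b,c$ be real numbers such that either $a,b,c\ge0$ and $0<a+b\le c$, or $a,b\ge 0$, $c\le 0$ and $a+b+c>0$. Then for every real $r\neq 0$, $$\frac{(e^{2ar}-1)(e^{2br}-1)(e^{cr}+1)^2}{(e^{(a+b+c)r}-1)^2}\ \ge\ \frac{16ab}{(a+b+c)^2}.$$ *)

From Stdlib Require Import Reals.

(* Since e^(2t) - 1 = 2 e^t sinh t and e^(2t) + 1 = 2 e^t cosh t, the right-hand
   side equals 4 sinh(ar) sinh(br) cosh^2(cr/2) / sinh^2((a+b+c)r/2), and the
   claim becomes the hyperbolic inequality (with x = ar, y = br, z = cr)

     4 x y sinh^2((x+y+z)/2) <= (x+y+z)^2 sinh x sinh y cosh^2(z/2).

   Everything rests on one analytic fact: sinh x / x is nondecreasing on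
   [0, oo), proved from the mean value theorem.  From it we derive that
   (cosh t - 1)/t^2 is nondecreasing and tanh t / t is nonincreasing; the first
   gives 4xy sinh^2((x+y)/2) <= (x+y)^2 sinh x sinh y, the second gives
   (x+y) sinh((x+y+z)/2) <= (x+y+z) sinh((x+y)/2) cosh(z/2) in the admissible
   regions, and multiplying the two yields the hyperbolic inequality.  The
   theorem then follows by scaling (with a parity argument for r < 0) and by
   rewriting the exponential quotient in hyperbolic form. *)

From Coquelicot Require Import Coquelicot.
From Stdlib Require Import Reals Lra Psatz.
Open Scope R_scope.

Lemma nondecreasing_of_derive_nonneg (f df : R -> R) (a b : R) :
  a <= b ->
  (forall x, a <= x <= b -> is_derive f x (df x)) ->
  (forall x, a <= x <= b -> 0 <= df x) ->
  f a <= f b.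
Proof.
  intros hab hderiv hpos.
  assert (hmin : Rmin a b = a) by (apply Rmin_left; lra).
  assert (hmax : Rmax a b = b) by (apply Rmax_right; lra).
  destruct (MVT_gen f a b df) as [c [hc hmvt]]; rewrite ?hmin, ?hmax in *.
  - intros x hx; apply hderiv; lra.
  - intros x hx; apply continuity_pt_filterlim, (ex_derive_continuous (V := R_NormedModule)).
    exists (df x); apply hderiv; lra.
  - assert (0 <= df c * (b - a)) by (apply Rmult_le_pos; [apply hpos|]; lra).
    lra.
Qed.

Lemma sinh_nonneg (x : R) : 0 <= x -> 0 <= sinh x.
Proof.
  intros hx; rewrite <- sinh_0.
  destruct (Req_dec x 0) as [-> | hx0]; [lra | left; apply sinh_lt; lra].
Qed.

Lemma sinh_neq0 (x : R) : x <> 0 -> sinh x <> 0.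
Proof.
  intros hx; rewrite <- sinh_0.
  destruct (Rdichotomy x 0 hx) as [h | h]; apply sinh_lt in h; lra.
Qed.

Lemma sinh_opp (x : R) : sinh (- x) = - sinh x.
Proof. unfold sinh; rewrite Ropp_involutive; lra. Qed.

Lemma cosh_opp (x : R) : cosh (- x) = cosh x.
Proof. unfold cosh; rewrite Ropp_involutive; lra. Qed.

(* sinh x <= x cosh x for x >= 0: the derivative of x cosh x - sinh x is
   x sinh x >= 0. *)
Lemma sinh_le_mul_cosh (x : R) : 0 <= x -> sinh x <= x * cosh x.
Proof.
  intros hx.
  enough (0 * cosh 0 - sinh 0 <= x * cosh x - sinh x) by (rewrite sinh_0 in *; lra).
  apply (nondecreasing_of_derive_nonneg (fun t => t * cosh t - sinh t)
           (fun t => t * sinh t)); [exact hx | |].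
  - intros t _; apply is_derive_Reals.
    replace (t * sinh t) with ((1 * cosh t + t * sinh t) - cosh t) by ring.
    apply derivable_pt_lim_minus; [|apply derivable_pt_lim_sinh].
    apply derivable_pt_lim_mult; [apply derivable_pt_lim_id | apply derivable_pt_lim_cosh].
  - intros t ht; apply Rmult_le_pos; [|apply sinh_nonneg]; lra.
Qed.

(* The monotonicity of sinh x / x on [0, oo), written without division.
   Its derivative is (x cosh x - sinh x) / x^2 >= 0. *)
Lemma sinh_div_id_mono (s t : R) : 0 <= s <= t -> t * sinh s <= s * sinh t.
Proof.
  intros [hs hst].
  destruct (Req_dec s 0) as [-> | hs0]; [rewrite sinh_0; lra |].
  assert (hratio : sinh s / s <= sinh t / t).
  { apply (nondecreasing_of_derive_nonneg (fun u => sinh u / u)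
             (fun u => (u * cosh u - sinh u) / u ^ 2)); [exact hst | |].
    - intros u hu; apply is_derive_Reals.
      replace ((u * cosh u - sinh u) / u ^ 2) with ((cosh u * u - 1 * sinh u) / u²)
        by (unfold Rsqr; field; lra).
      apply (derivable_pt_lim_div sinh id);
        [apply derivable_pt_lim_sinh | apply derivable_pt_lim_id | unfold id; lra].
    - intros u hu; apply Rdiv_le_0_compat.
      + pose proof (sinh_le_mul_cosh u); lra.
      + apply pow_lt; lra. }
  replace (t * sinh s) with (sinh s / s * (s * t)) by (field; lra).
  replace (s * sinh t) with (sinh t / t * (s * t)) by (field; lra).
  apply Rmult_le_compat_r; nra.
Qed.

Lemma exp_double (t : R) : exp (2 * t) = exp t * exp t.
Proof. rewrite <- exp_plus; f_equal; ring. Qed.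

Ltac expand_hyperbolic :=
  unfold sinh, cosh, Rminus;
  repeat rewrite ?Ropp_plus_distr, ?Ropp_involutive, ?exp_plus, ?exp_Ropp;
  field; repeat split; apply Rgt_not_eq, exp_pos.

Lemma cosh_sub1 (t : R) : cosh t - 1 = 2 * sinh (t / 2) ^ 2.
Proof.
  replace t with (t / 2 + t / 2) at 1 by field.
  expand_hyperbolic.
Qed.

Lemma sinh_mul_sinh (x y : R) : 2 * sinh x * sinh y = cosh (x + y) - cosh (x - y).
Proof. expand_hyperbolic. Qed.

Lemma sinh_mul_cosh (s t : R) : 2 * sinh s * cosh t = sinh (t + s) - sinh (t - s).
Proof. expand_hyperbolic. Qed.

Lemma cosh_mul_sinh (s t : R) : 2 * cosh s * sinh t = sinh (t + s) + sinh (t - s).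
Proof. expand_hyperbolic. Qed.

Lemma sinh_add (u v : R) : sinh (u + v) = sinh u * cosh v + cosh u * sinh v.
Proof. expand_hyperbolic. Qed.

Lemma exp_double_sub1 (t : R) : exp (2 * t) - 1 = 2 * exp t * sinh t.
Proof. rewrite exp_double; expand_hyperbolic. Qed.

Lemma exp_double_add1 (t : R) : exp (2 * t) + 1 = 2 * exp t * cosh t.
Proof. rewrite exp_double; expand_hyperbolic. Qed.

(* (cosh t - 1) / t^2 = (sinh (t/2) / (t/2))^2 / 2 is nondecreasing on
   [0, oo). *)
Lemma cosh_sub1_mono (d p : R) : 0 <= d <= p -> (cosh d - 1) * p ^ 2 <= (cosh p - 1) * d ^ 2.
Proof.
  intros hdp; rewrite !cosh_sub1.
  assert (hmono : p / 2 * sinh (d / 2) <= d / 2 * sinh (p / 2))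
    by (apply sinh_div_id_mono; lra).
  assert (0 <= p / 2 * sinh (d / 2))
    by (apply Rmult_le_pos; [|apply sinh_nonneg]; lra).
  assert ((p / 2 * sinh (d / 2)) ^ 2 <= (d / 2 * sinh (p / 2)) ^ 2)
    by (apply pow_incr; lra).
  nra.
Qed.

(* tanh t / t is nonincreasing on [0, oo): by the product-to-sum formulas
   this is the monotonicity of sinh x / x between t - s and t + s. *)
Lemma tanh_div_id_antimono (s t : R) :
  0 <= s <= t -> s * cosh s * sinh t <= t * sinh s * cosh t.
Proof.
  intros hst.
  assert (hmono : (t + s) * sinh (t - s) <= (t - s) * sinh (t + s))
    by (apply sinh_div_id_mono; lra).
  pose proof (sinh_mul_cosh s t); pose proof (cosh_mul_sinh s t).
  nra.
Qed.

(* With sinh x sinh y = (cosh (x+y) - cosh (x-y)) / 2 and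
   (x+y)^2 - 4xy = (x-y)^2 this is cosh_sub1_mono for |x-y| <= x+y. *)
Lemma sinh_mul_sinh_lower (x y : R) : 0 <= x -> 0 <= y ->
  4 * x * y * sinh ((x + y) / 2) ^ 2 <= (x + y) ^ 2 * sinh x * sinh y.
Proof.
  intros hx hy.
  assert (hgap : (cosh (x - y) - 1) * (x + y) ^ 2 <= (cosh (x + y) - 1) * (x - y) ^ 2).
  { destruct (Rle_dec y x).
    - apply cosh_sub1_mono; lra.
    - replace (x - y) with (- (y - x)) by ring; rewrite cosh_opp.
      replace ((- (y - x)) ^ 2) with ((y - x) ^ 2) by ring.
      apply cosh_sub1_mono; lra. }
  assert (hhalf : sinh ((x + y) / 2) ^ 2 = (cosh (x + y) - 1) / 2)
    by (rewrite cosh_sub1; field).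
  replace ((x + y) ^ 2 * sinh x * sinh y) with ((x + y) ^ 2 * (2 * sinh x * sinh y) / 2)
    by field.
  rewrite hhalf, sinh_mul_sinh.
  replace (4 * x * y) with ((x + y) ^ 2 - (x - y) ^ 2) by ring.
  lra.
Qed.

(* Second half: sinh (u+v) / (u+v) <= sinh u cosh v / u whenever v >= u, or
   v <= 0 <= u + v.  Expanding sinh (u+v), this is tanh_div_id_antimono
   applied to (u, v), resp. to (-v, u). *)
Lemma sinh_add_upper (u v : R) : 0 < u -> u <= v \/ (v <= 0 /\ 0 <= u + v) ->
  u * sinh (u + v) <= (u + v) * sinh u * cosh v.
Proof.
  intros hu hv.
  enough (u * cosh u * sinh v <= v * sinh u * cosh v) by (rewrite sinh_add; nra).
  destruct hv as [huv | [hv0 huv]].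
  - apply tanh_div_id_antimono; lra.
  - pose proof (tanh_div_id_antimono (- v) u) as h.
    rewrite cosh_opp, sinh_opp in h.
    enough (- v * cosh v * sinh u <= u * - sinh v * cosh u) by nra.
    apply h; lra.
Qed.

(* The inequality in hyperbolic form.  With u = (x+y)/2 and v = z/2, square
   sinh_add_upper and combine it with sinh_mul_sinh_lower. *)
Lemma hyperbolic_inequality (x y z : R) :
  0 <= x -> 0 <= y -> 0 < x + y -> x + y <= z \/ (z <= 0 /\ 0 <= x + y + z) ->
  4 * x * y * sinh ((x + y + z) / 2) ^ 2
    <= (x + y + z) ^ 2 * sinh x * sinh y * cosh (z / 2) ^ 2.
Proof.
  intros hx hy hxy hz.
  set (u := (x + y) / 2); set (v := z / 2).
  replace ((x + y + z) / 2) with (u + v) by (unfold u, v; field).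
  replace (x + y + z) with (2 * (u + v)) by (unfold u, v; field).
  assert (hu : 0 < u) by (unfold u; lra).
  assert (hsum : 4 * x * y * sinh u ^ 2 <= (2 * u) ^ 2 * sinh x * sinh y).
  { replace (2 * u) with (x + y) by (unfold u; field); apply sinh_mul_sinh_lower; lra. }
  assert (hadd : u * sinh (u + v) <= (u + v) * sinh u * cosh v).
  { apply sinh_add_upper; [exact hu | unfold u, v; lra]. }
  assert (huv : 0 <= u + v) by (unfold u, v; destruct hz; lra).
  assert (hadd_nonneg : 0 <= u * sinh (u + v))
    by (apply Rmult_le_pos; [|apply sinh_nonneg]; lra).
  assert (hadd2 : (u * sinh (u + v)) ^ 2 <= ((u + v) * sinh u * cosh v) ^ 2)
    by (apply pow_incr; lra).
  apply (Rmult_le_reg_r (u ^ 2)); [apply pow_lt; lra |].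
  assert (hxy4 : 0 <= 4 * x * y) by (rewrite Rmult_assoc; apply Rmult_le_pos; nra).
  assert (hcv : 0 <= (u + v) ^ 2 * cosh v ^ 2)
    by (apply Rmult_le_pos; apply pow2_ge_0).
  apply (Rmult_le_compat_l _ _ _ hxy4) in hadd2.
  apply (Rmult_le_compat_l _ _ _ hcv) in hsum.
  lra.
Qed.

Definition admissible (a b c : R) : Prop :=
  (0 <= a /\ 0 <= b /\ 0 <= c /\ 0 < a + b /\ a + b <= c) \/
  (0 <= a /\ 0 <= b /\ c <= 0 /\ 0 < a + b + c).

Lemma hyperbolic_inequality_pos (a b c r : R) : admissible a b c -> 0 < r ->
  4 * a * b * sinh ((a + b + c) * r / 2) ^ 2
    <= (a + b + c) ^ 2 * sinh (a * r) * sinh (b * r) * cosh (c * r / 2) ^ 2.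
Proof.
  intros habc hr.
  assert (h : 4 * (a * r) * (b * r) * sinh ((a * r + b * r + c * r) / 2) ^ 2
              <= (a * r + b * r + c * r) ^ 2 * sinh (a * r) * sinh (b * r)
                 * cosh (c * r / 2) ^ 2).
  { apply hyperbolic_inequality; destruct habc; nra. }
  replace (a * r + b * r + c * r) with ((a + b + c) * r) in h by ring.
  apply (Rmult_le_reg_r (r ^ 2)); [apply pow_lt; lra |].
  lra.
Qed.

(* Both sides are even in r (sinh is odd, cosh is even), so the case r < 0
   reduces to r > 0. *)
Lemma hyperbolic_inequality_scaled (a b c r : R) : admissible a b c -> r <> 0 ->
  4 * a * b * sinh ((a + b + c) * r / 2) ^ 2
    <= (a + b + c) ^ 2 * sinh (a * r) * sinh (b * r) * cosh (c * r / 2) ^ 2.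
Proof.
  intros habc hr.
  destruct (Rdichotomy r 0 hr) as [hneg | hpos].
  - assert (hopp : 0 < - r) by lra.
    pose proof (hyperbolic_inequality_pos a b c (- r) habc hopp) as h.
    replace ((a + b + c) * - r / 2) with (- ((a + b + c) * r / 2)) in h by field.
    replace (a * - r) with (- (a * r)) in h by ring.
    replace (b * - r) with (- (b * r)) in h by ring.
    replace (c * - r / 2) with (- (c * r / 2)) in h by field.
    rewrite !sinh_opp, cosh_opp in h.
    lra.
  - apply hyperbolic_inequality_pos; assumption.
Qed.

(* The quotient of the theorem in hyperbolic form: writing e^(2t) -+ 1 =
   2 e^t sinh t, resp. 2 e^t cosh t, all exponential prefactors cancel. *)
Lemma exp_quotient_hyperbolic (a b c r : R) : (a + b + c) * r <> 0 ->
  (exp (2 * a * r) - 1) * (exp (2 * b * r) - 1) * (exp (c * r) + 1) ^ 2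
    / (exp ((a + b + c) * r) - 1) ^ 2
  = 4 * sinh (a * r) * sinh (b * r) * cosh (c * r / 2) ^ 2
    / sinh ((a + b + c) * r / 2) ^ 2.
Proof.
  intros hs.
  assert (hsinh : sinh ((a + b + c) * r / 2) <> 0) by (apply sinh_neq0; lra).
  replace (exp (2 * a * r)) with (exp (2 * (a * r))) by (f_equal; ring).
  replace (exp (2 * b * r)) with (exp (2 * (b * r))) by (f_equal; ring).
  replace (exp (c * r)) with (exp (2 * (c * r / 2))) by (f_equal; field).
  replace (exp ((a + b + c) * r)) with (exp (2 * ((a + b + c) * r / 2))) by (f_equal; field).
  rewrite !exp_double_sub1, exp_double_add1.
  replace (exp (a * r)) with (exp (a * r / 2) * exp (a * r / 2))
    by (rewrite <- exp_plus; f_equal; field).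
  replace (exp (b * r)) with (exp (b * r / 2) * exp (b * r / 2))
    by (rewrite <- exp_plus; f_equal; field).
  replace (exp ((a + b + c) * r / 2))
    with (exp (a * r / 2) * exp (b * r / 2) * exp (c * r / 2))
    by (rewrite <- !exp_plus; f_equal; field).
  field; repeat split; try exact hsinh; apply Rgt_not_eq, exp_pos.
Qed.

Theorem lemma4p1 (a b c : R)
  (habc : (0 <= a /\ 0 <= b /\ 0 <= c /\ 0 < a + b /\ a + b <= c) \/
          (0 <= a /\ 0 <= b /\ c <= 0 /\ 0 < a + b + c))
  (r : R) (hr : r <> 0) :
  16 * a * b / (a + b + c) ^ 2 <=
  (exp (2 * a * r) - 1) * (exp (2 * b * r) - 1) * (exp (c * r) + 1) ^ 2
    / (exp ((a + b + c) * r) - 1) ^ 2.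
Proof.
  assert (hs : 0 < a + b + c) by (destruct habc; lra).
  assert (hsr : (a + b + c) * r <> 0) by (apply Rmult_integral_contrapositive_currified; lra).
  assert (hden : 0 < sinh ((a + b + c) * r / 2) ^ 2)
    by (apply pow2_gt_0, sinh_neq0; lra).
  pose proof (hyperbolic_inequality_scaled a b c r habc hr) as hhyp.
  rewrite exp_quotient_hyperbolic by exact hsr.
  apply (Rle_div_r _ _ _ hden).
  replace (16 * a * b / (a + b + c) ^ 2 * sinh ((a + b + c) * r / 2) ^ 2)
    with (4 * (4 * a * b * sinh ((a + b + c) * r / 2) ^ 2) / (a + b + c) ^ 2)
    by (field; lra).
  apply Rle_div_l; [apply pow_lt; exact hs |].
  lra.
Qed.
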